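(* Let $\mathcal{V}$ be a variety of algebras, $\mathcal{C}$ a full subcategory of the category of finitely generated free $\mathcal{V}$-algebras containing the free monogenic algebra $A_0$ on $x_0$, and $\Phi$ an automorphism of $\mathcal{C}$ with main function $(s^\Phi_A)$. Let $A$ be a $\mathcal{C}$-algebra and $X$ a basis of $\Phi(A)$. Then either no element of $X$ belongs to $s^\Phi_A(|A|)$, or $s^\Phi_A:|A|\to|\Phi(A)|$ is surjective.
   Context: Morphisms of $\mathcal{C}$ are all homomorphisms. For $a\in A$, $\alpha^A_a:A_0\to A$ is the homomorphism with $x_0\mapsto a$. Let $\eta^\Phi_0:\Phi^{-1}(A_0)\to A_0$ be the homomorphism sending every element of a fixed basis of $\Phi^{-1}(A_0)$ to $x_0$ (the identity if $\Phi(A_0)=A_0$), and $\eta^\Phi=\Phi(\eta^\Phi_0):A_0\to\Phi(A_0)$. The main function is $s^\Phi_A:|A|\to|\Phi(A)|$, $s^\Phi_A(a)=\Phi(\alpha^A_a)(\eta^\Phi(x_0))$. *)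

From mathcomp Require Import all_boot.
From Stdlib Require Import ClassicalEpsilon.
Set Implicit Arguments. Unset Strict Implicit. Unset Printing Implicit Defensive.

Record signature := Signature { op : Type; arity : op -> nat }.

Record algebra (S : signature) := Algebra {
  carrier :> Type;
  interp : forall f : op S, ('I_(arity f) -> carrier) -> carrier }.
Arguments interp {S} a f _.

Definition is_hom (S : signature) (A B : algebra S) (h : A -> B) : Prop :=
  forall (f : op S) (args : 'I_(arity f) -> A),
    h (interp A f args) = interp B f (fun i => h (args i)).

Inductive term (S : signature) :=
| Var of nat
| App (f : op S) of ('I_(arity f) -> term S).
Arguments Var {S} _.
Arguments App {S} f _.

Fixpoint eval (S : signature) (A : algebra S) (v : nat -> A) (t : term S) : A :=
  match t with
  | Var n => v n
  | App f a => interp A f (fun i => eval v (a i))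
  end.

(** A variety, given (Birkhoff) by a set of identities [E]. *)
Definition in_variety (S : signature) (E : term S -> term S -> Prop)
  (A : algebra S) : Prop :=
  forall t u, E t u -> forall v : nat -> A, eval v t = eval v u.

(** [X] is a basis of the algebra [A] (i.e. [A] is free in the variety on [X]):
    [A] lies in the variety and every map from [X] to an algebra of the
    variety extends uniquely to a homomorphism. *)
Definition basis (S : signature) (E : term S -> term S -> Prop)
  (A : algebra S) (X : A -> Prop) : Prop :=
  in_variety E A /\
  forall (B : algebra S), in_variety E B ->
  forall g : A -> B,
    (exists h : A -> B, is_hom h /\ forall x, X x -> h x = g x) /\
    (forall h1 h2 : A -> B, is_hom h1 -> is_hom h2 ->
       (forall x, X x -> h1 x = g x) -> (forall x, X x -> h2 x = g x) ->
       forall a, h1 a = h2 a).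

Arguments basis {S} E A X.
Arguments in_variety {S} E A.

Definition fg_free (S : signature) (E : term S -> term S -> Prop)
  (A : algebra S) : Prop :=
  exists s : list A, basis E A (fun x => List.In x s).

Definition tr (S : signature) (I : Type) (obj : I -> algebra S) (i j : I)
  (e : i = j) : obj i -> obj j :=
  fun a => eq_rect i (fun k => carrier (obj k)) a j e.

(** [alpha_a : A_0 -> A], the homomorphism with [x0 |-> a] (chosen by
    Hilbert's epsilon; unique when [A_0] is free on [x0]). *)
Definition alpha (S : signature) (A0 A : algebra S) (x0 : A0) (a : A) : A0 -> A :=
  epsilon (inhabits (fun _ : A0 => a))
          (fun h : A0 -> A => is_hom h /\ h x0 = a).

(** The main function [s^Phi_A(a) = Phi(alpha_a)(eta^Phi(x0))],
    where [Fm] is the morphism part of [Phi] and [eta : A_0 -> Phi(A_0)]. *)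
Definition main_fun (S : signature) (I : Type) (obj : I -> algebra S)
  (Fo : I -> I)
  (Fm : forall i j : I, (obj i -> obj j) -> obj (Fo i) -> obj (Fo j))
  (i0 : I) (x0 : obj i0) (eta : obj i0 -> obj (Fo i0)) (k : I)
  (a : obj k) : obj (Fo k) :=
  Fm i0 k (alpha x0 a) (eta x0).
Arguments tr {S I} obj {i j} e _.
Arguments main_fun {S I obj Fo} Fm {i0} x0 eta k a.

From mathcomp Require Import all_boot.
From Stdlib Require Import Classical ClassicalEpsilon FunctionalExtensionality.

(* Since [A_0] is free on [x0], [alpha_(h a) = h \o alpha_a] for every
   homomorphism [h], so the main function is natural:
   [s_B (h a) = Phi(h) (s_A a)], whatever [eta] is.  If [s_A a = x] for a basis
   element [x] of [Phi(A)], then for any [b] the homomorphism of [Phi(A)]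
   sending the whole basis to [b] is [Phi(h)] for some endomorphism [h] of [A]
   (Phi is full), hence [b = Phi(h) x = s_A (h a)]. *)

Lemma in_variety_fg_free {S : signature} {E : term S -> term S -> Prop}
  {A : algebra S} : fg_free E A -> in_variety E A.
Proof. by case=> s []. Qed.

Lemma basis_const_hom {S : signature} {E : term S -> term S -> Prop}
  {A : algebra S} {X : A -> Prop} (b : A) :
  basis E A X -> exists g : A -> A, is_hom g /\ forall x, X x -> g x = b.
Proof. by case=> EA free; case: (free A EA (fun=> b)). Qed.

Section MonogenicFree.

Context {S : signature} {E : term S -> term S -> Prop} {A0 : algebra S} {x0 : A0}.
Hypothesis A0_free : basis E A0 (fun y => y = x0).

Lemma alpha_spec {A : algebra S} (a : A) :
  in_variety E A -> is_hom (alpha x0 a) /\ alpha x0 a x0 = a.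
Proof.
move=> EA; rewrite /alpha; apply epsilon_spec.
have [[h [h_hom hx0]] _] := A0_free.2 A EA (fun=> a).
by exists h; split; last exact: hx0.
Qed.

Lemma alpha_comp {A B : algebra S} {h : A -> B} (a : A) :
  in_variety E A -> in_variety E B -> is_hom h ->
  alpha x0 (h a) = (fun y => h (alpha x0 a y)).
Proof.
move=> EA EB h_hom.
have [a_hom a_x0] := alpha_spec a EA.
have [ha_hom ha_x0] := alpha_spec (h a) EB.
apply: functional_extensionality.
apply: (A0_free.2 B EB (fun=> h a)).2 => // [f args | y -> | y ->].
- by rewrite a_hom h_hom.
- exact: ha_x0.
- by rewrite a_x0.
Qed.

End MonogenicFree.

Section MainFunction.

Context {S : signature} {E : term S -> term S -> Prop}.
Context {I : Type} {obj : I -> algebra S} {Fo : I -> I}.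
Context {Fm : forall i j : I, (obj i -> obj j) -> obj (Fo i) -> obj (Fo j)}.
Hypothesis Fm_comp : forall i j l (h : obj i -> obj j) (g : obj j -> obj l),
  is_hom h -> is_hom g ->
  forall x, Fm i l (fun y => g (h y)) x = Fm j l g (Fm i j h x).
Context {i0 : I} {x0 : obj i0} {eta : obj i0 -> obj (Fo i0)}.
Hypothesis A0_free : basis E (obj i0) (fun y => y = x0).

Lemma main_fun_natural {i j : I} {h : obj i -> obj j} (a : obj i) :
  in_variety E (obj i) -> in_variety E (obj j) -> is_hom h ->
  main_fun Fm x0 eta j (h a) = Fm i j h (main_fun Fm x0 eta i a).
Proof.
move=> Ei Ej h_hom; have [a_hom _] := alpha_spec A0_free a Ei.
by rewrite /main_fun (alpha_comp A0_free a Ei Ej h_hom) Fm_comp.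
Qed.

Hypothesis Fm_full : forall i j (g : obj (Fo i) -> obj (Fo j)), is_hom g ->
  exists h : obj i -> obj j, is_hom h /\ forall x, Fm i j h x = g x.

Lemma main_fun_surj_of_basis_image {k : I} {X : obj (Fo k) -> Prop}
  {x : obj (Fo k)} {a : obj k} :
  in_variety E (obj k) -> basis E (obj (Fo k)) X ->
  X x -> main_fun Fm x0 eta k a = x ->
  forall b, exists a', main_fun Fm x0 eta k a' = b.
Proof.
move=> Ek X_basis Xx sa b.
have [g [g_hom gX]] := basis_const_hom b X_basis.
have [h [h_hom Fh]] := Fm_full k k g g_hom.
exists (h a).
by rewrite (main_fun_natural a Ek Ek h_hom) sa Fh gX.
Qed.

End MainFunction.

Theorem proposition4
  (S : signature) (E : term S -> term S -> Prop)
  (* the category C: objects indexed by I, all morphisms = homomorphisms *)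
  (I : Type) (obj : I -> algebra S)
  (obj_fg_free : forall i, fg_free E (obj i))
  (* C contains the free monogenic algebra A_0 on x_0 *)
  (i0 : I) (x0 : obj i0)
  (A0_free : basis E (obj i0) (fun y => y = x0))
  (* Phi : automorphism of C (functor, bijective on objects and on hom-sets) *)
  (Fo : I -> I)
  (Fm : forall i j : I, (obj i -> obj j) -> obj (Fo i) -> obj (Fo j))
  (Fm_hom : forall i j (h : obj i -> obj j), is_hom h -> is_hom (Fm i j h))
  (Fm_id : forall i (x : obj (Fo i)), Fm i i (fun y => y) x = x)
  (Fm_comp : forall i j l (h : obj i -> obj j) (g : obj j -> obj l),
      is_hom h -> is_hom g ->
      forall x, Fm i l (fun y => g (h y)) x = Fm j l g (Fm i j h x))
  (Fo_inj : forall i j, Fo i = Fo j -> i = j)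
  (Fo_surj : forall j, exists i, Fo i = j)
  (Fm_inj : forall i j (h h' : obj i -> obj j), is_hom h -> is_hom h' ->
      (forall x, Fm i j h x = Fm i j h' x) -> forall y, h y = h' y)
  (Fm_surj : forall i j (g : obj (Fo i) -> obj (Fo j)), is_hom g ->
      exists h : obj i -> obj j, is_hom h /\ forall x, Fm i j h x = g x)
  (* eta_0 : Phi^{-1}(A_0) -> A_0, sending a fixed basis Y to x_0,
     the identity when Phi(A_0) = A_0 *)
  (j0 : I) (ej0 : Fo j0 = i0) (Y : obj j0 -> Prop) (Y_basis : basis E (obj j0) Y)
  (eta0 : obj j0 -> obj i0) (eta0_hom : is_hom eta0)
  (eta0_Y : forall y, Y y -> eta0 y = x0)
  (eta0_id : forall (e : j0 = i0) (b : obj j0), eta0 b = tr obj e b)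
  (* a C-algebra A and a basis X of Phi(A) *)
  (k : I) (X : obj (Fo k) -> Prop) (X_basis : basis E (obj (Fo k)) X) :
  let eta : obj i0 -> obj (Fo i0) :=
    fun a => Fm j0 i0 eta0 (tr obj (esym ej0) a) in
  let s := main_fun Fm x0 eta k in
  (forall x, X x -> ~ (exists a, s a = x)) \/ (forall b, exists a, s a = b).
Proof.
move=> eta s.
have [[x [Xx [a sa]]] | no_hit] := classic (exists x, X x /\ exists a, s a = x).
- right; have Ek := in_variety_fg_free (obj_fg_free k).
  exact: (main_fun_surj_of_basis_image Fm_comp A0_free Fm_surj Ek X_basis Xx sa).
- by left=> x Xx hit; apply: no_hit; exists x.
Qed.
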